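(* For every integer $n\ge 2$ there exists a weighted undirected graph $G$ on $n$ vertices with $\mathrm{cdim}(G)=2n-3$.
   Context: A weighted undirected graph $G=(V,w)$ consists of a finite vertex set $V$ and a weight function $w$ assigning a nonnegative real number to each unordered pair of distinct vertices. The edge set is $E=\{e : w(e)>0\}$, $m=|E|$. For $\emptyset \ne X \subsetneq V$, $\Delta(X)$ denotes the set of edges of $E$ with exactly one endpoint in $X$ (a cut), with weight $w(\Delta(X))=\sum_{e\in\Delta(X)}w(e)$. $\mathcal{M}(G)$ is the set of cuts of minimum weight. For $S\subseteq E$, $\chi(S)\in\{0,1\}^m$ is its characteristic vector indexed by $E$. The cut dimension is $\mathrm{cdim}(G)=\dim\,\mathrm{span}\{\chi(S): S\in\mathcal{M}(G)\}$. *)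

From HB Require Import structures.
From mathcomp Require Import all_boot all_order all_algebra.
From mathcomp Require Import reals.
Set Implicit Arguments. Unset Strict Implicit. Unset Printing Implicit Defensive.
Import Order.TTheory GRing.Theory Num.Theory.
Local Open Scope ring_scope.

(* Vertex set V = 'I_n.  Unordered pairs of distinct vertices are the
   2-element subsets of 'I_n.  A weight function is w : {set 'I_n} -> R,
   only its values on 2-element sets matter. *)

Section CutDim.
Variables (R : realType) (n : nat) (w : {set 'I_n} -> R).

Definition nonneg_weight : Prop := forall e : {set 'I_n}, #|e| = 2%N -> 0 <= w e.

Definition edges : {set {set 'I_n}} := [set e : {set 'I_n} | (#|e| == 2%N) && (0 < w e)].

Definition cut (X : {set 'I_n}) : {set {set 'I_n}} :=
  [set e in edges | #|e :&: X| == 1%N].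

Definition cut_weight (X : {set 'I_n}) : R := \sum_(e in cut X) w e.

Definition proper_nonempty (X : {set 'I_n}) : bool := (X != set0) && (X != setT).

Definition min_cut_sideb (X : {set 'I_n}) : bool :=
  proper_nonempty X &&
  [forall Y : {set 'I_n}, proper_nonempty Y ==> (cut_weight X <= cut_weight Y)].

Definition chi (S : {set {set 'I_n}}) : 'rV[R]_#|edges| :=
  \row_(i < #|edges|) (if enum_val i \in S then 1 else 0).

Definition cdim : nat :=
  \rank (\sum_(X : {set 'I_n} | min_cut_sideb X) <<chi (cut X)>>)%MS.

End CutDim.

From HB Require Import structures.
From mathcomp Require Import all_boot all_order all_algebra.
From mathcomp Require Import reals.
From mathcomp Require Import zify.
Set Implicit Arguments. Unset Strict Implicit. Unset Printing Implicit Defensive.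
Import Order.TTheory GRing.Theory Num.Theory.

(* For n >= 2 we exhibit a weighted graph G_n on n vertices with cut
   dimension 2n - 3.  G_n is the union of two Hamiltonian cycles
     C1 = 0, 1, 2, ..., n-1, 0   and   C2 = 0, 1, 3, 5, ..., 6, 4, 2, 0
   (odd vertices upwards, even ones downwards), each edge weighted by the
   number of cycles running along it.

   - A cyclic permutation crosses every cut an even, nonzero number of times,
     and a singleton exactly twice.  So every cut of G_n weighs at least 4,
     and the minimum cuts are those crossed exactly twice by both cycles
     (section TwoCycles, for any two cyclic permutations).
   - Upper bound: the signed difference chi(C1) - chi(C2) is orthogonal to
     every minimum cut; it is nonzero when n >= 4, so cdim <= m - 1.
   - Lower bound: singletons and prefixes {0, ..., k-1} are minimum cuts.
     Comparing Delta({k}) + Delta(prefix k) with Delta(prefix (k+1)) isolates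
     the edges at k going down, resp. up (section CutCalculus); a triangular
     elimination then puts the unit vector of every edge except the closing
     edge {0, n-1} in the span, so cdim >= m - 1 (section LowerBound).
   - Counting gives m = 2n - 2 for n >= 4.  For n = 2, 3 the graph is
     complete with m = 2n - 3 edges and the closing edge is reached too. *)

Lemma card_set_sum (T : finType) (P : pred T) : #|[set v | P v]| = \sum_v (P v : nat).
Proof. by rewrite -sum1_card big_mkcond; apply: eq_bigr => v _; rewrite inE; case: (P v). Qed.

Lemma sum_eq_mem (T : finType) (A : {pred T}) (x : T) :
  \sum_(e in A) ((x == e) : nat) = (x \in A).
Proof.
case: (boolP (x \in A)) => xA.
  rewrite (bigD1 x) //= eqxx big1 // => e /andP[_ ne]; by rewrite eq_sym (negbTE ne).
by rewrite big1 // => e eA; case: eqP => // ex; rewrite ex eA in xA.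
Qed.

Lemma card_set2I_eq1 (T : finType) (a b : T) (Y : {set T}) : a != b ->
  (#|[set a; b] :&: Y| == 1) = ((a \in Y) != (b \in Y)).
Proof.
move=> ab.
have set1I c : [set c] :&: Y = if c \in Y then [set c] else set0.
  apply/setP => x; case cY: (c \in Y); rewrite !inE;
  by case: eqP => [->|]; rewrite ?cY ?andbF.
rewrite setIUl !set1I.
case: (a \in Y); case: (b \in Y); rewrite ?set0U ?setU0 ?cards1 ?cards0 //.
by rewrite cards2 ab.
Qed.

Lemma set2_eq (T : finType) (a b c d : T) : [set a; b] = [set c; d] ->
  (a = c /\ b = d) \/ (a = d /\ b = c).
Proof.
move=> E; have mem x : (x \in [set a; b]) = (x \in [set c; d]) by rewrite E.
move: (mem a) (mem b) (mem c) (mem d); rewrite !inE !eqxx ?orbT /=.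
by move=> /esym/orP[]/eqP ea /esym/orP[]/eqP eb /orP[]/eqP ec /orP[]/eqP ed; subst; auto.
Qed.

Section Crossings.
Variable T : finType.
Implicit Types (sg : T -> T) (Y : {set T}).

Definition cross sg Y : nat := #|[set v | (v \in Y) != (sg v \in Y)]|.

(* sg is a cyclic permutation of T: a fixpoint-free injection leaving no
   proper nonempty subset invariant.  Its steps form a Hamiltonian cycle. *)
Definition cyclic_perm sg : Prop :=
  [/\ injective sg, forall v, sg v != v &
      forall Y, (forall v, (v \in Y) = (sg v \in Y)) -> Y = set0 \/ Y = setT].

Definition mult sg (e : {set T}) : nat := #|[set v | [set v; sg v] == e]|.

(* Parity: a permutation crosses every cut an even number of times. *)
Lemma cross_double sg Y : injective sg ->
  cross sg Y + 2 * #|[set v | (v \in Y) && (sg v \in Y)]| = 2 * #|Y|.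
Proof.
move=> inj.
have cardY : #|Y| = \sum_v ((v \in Y) : nat).
  by rewrite -card_set_sum; apply: eq_card => v; rewrite inE.
have cardYs : #|Y| = \sum_v ((sg v \in Y) : nat) by rewrite cardY (reindex_inj inj).
rewrite /cross !card_set_sum big_distrr mul2n -addnn {1}cardY cardYs.
rewrite -!big_split /=; apply: eq_bigr => v _.
by case: (v \in Y); case: (sg v \in Y).
Qed.

Lemma cross_ge2 sg Y : cyclic_perm sg -> Y != set0 -> Y != setT -> 2 <= cross sg Y.
Proof.
move=> [inj _ conn] Y0 YT; have := cross_double Y inj.
suff : cross sg Y != 0 by lia.
apply/negP => /eqP /cards0_eq noX.
have inv v : (v \in Y) = (sg v \in Y).
  by apply/eqP; apply/negPn/negP => hv; have := in_set0 v; rewrite -noX inE hv.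
by case: (conn Y inv) => E; [move: Y0 | move: YT]; rewrite E eqxx.
Qed.

(* Only v itself and its preimage cross the cut of a singleton. *)
Lemma cross_set1_le sg v : injective sg -> cross sg [set v] <= 2.
Proof.
move=> inj; apply: leq_trans (_ : #|[set v; invF inj v]| <= 2); last first.
  by rewrite cards2; case: eqP.
apply: subset_leq_card; apply/subsetP => u; rewrite !inE.
case: (eqVneq u v) => [//|_] /= step.
have <- : sg u = v by apply/eqP; move: step; case: (sg u == v).
by rewrite invF_f eqxx.
Qed.

Lemma mult_step_gt0 sg v : 0 < mult sg [set v; sg v].
Proof. by apply/card_gt0P; exists v; rewrite inE. Qed.

Lemma cross_le2 sg Y a b :
  (forall v, (v \in Y) != (sg v \in Y) -> (v == a) || (v == b)) -> cross sg Y <= 2.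
Proof.
move=> at_ab; apply: leq_trans (_ : #|[set a; b]| <= 2); last by rewrite cards2; case: eqP.
by apply: subset_leq_card; apply/subsetP => v; rewrite !inE => /at_ab.
Qed.

End Crossings.

Section LinearAlgebra.
Local Open Scope ring_scope.

Lemma rank_le_pred_ker (F : fieldType) p m (S : 'M[F]_(p, m)) (phi : 'cV[F]_m) :
  (S <= kermx phi)%MS -> phi != 0 -> (\rank S <= m - 1)%N.
Proof.
move=> /mxrankS Sker phi0; apply: leq_trans Sker _; rewrite mxrank_ker.
have : \rank phi != 0%N by rewrite mxrank_eq0.
lia.
Qed.

Lemma rank_le_addsmx_row (F : fieldType) p m (S : 'M[F]_(p, m)) (v : 'rV[F]_m) :
  (\rank (S + <<v>>)%MS <= \rank S + 1)%N.
Proof.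
apply: leq_trans (mxrank_adds_leqif _ _) _.
by rewrite leq_add2l mxrank_gen rank_leq_row.
Qed.

Lemma half_submx (F : numFieldType) p m (S : 'M[F]_(p, m)) (x y z u : 'rV[F]_m) :
  x + y = z + 2%:R *: u -> (x <= S)%MS -> (y <= S)%MS -> (z <= S)%MS -> (u <= S)%MS.
Proof.
move=> E xS yS zS.
have -> : u = 2%:R^-1 *: (x + y - z).
  by rewrite E addrAC subrr add0r scalerA mulVf ?pnatr_eq0 // scale1r.
by rewrite scalemx_sub // addmx_sub ?addmx_sub // -scaleN1r scalemx_sub.
Qed.

End LinearAlgebra.

Definition prefix {n : nat} (k : nat) : {set 'I_n} := [set i : 'I_n | (i < k)%N].

Section CutCalculus.
Variables (R : realType) (n : nat) (w : {set 'I_n} -> R).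
Local Notation m := #|edges w|.
Local Notation chi := (chi w).
Local Open Scope ring_scope.

Definition mincut_span : 'M[R]_m :=
  (\sum_(X | min_cut_sideb w X) <<chi (cut w X)>>)%MS.

Lemma cdimE : cdim w = \rank mincut_span.
Proof. by []. Qed.

Lemma chi_cut_in_span X : min_cut_sideb w X -> (chi (cut w X) <= mincut_span)%MS.
Proof. by move=> minX; apply: (sumsmx_sup X) => //; rewrite genmxE. Qed.

Lemma edge_set2 e : e \in edges w -> exists a b, a != b /\ e = [set a; b].
Proof. by rewrite inE => /andP[/cards2P]. Qed.

Lemma mem_cut Y e : e \in edges w -> (e \in cut w Y) = (#|e :&: Y| == 1%N).
Proof. by move=> eE; rewrite /cut in_set eE. Qed.

Lemma proper_set1 (v : 'I_n) : (1 < n)%N -> proper_nonempty [set v].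
Proof.
move=> n2; apply/andP; split; first by apply/set0Pn; exists v; rewrite inE.
have lt_u : ((v == 0%N :> nat) < n)%N by case: (_ == _); lia.
apply/negP => /eqP full; have : Ordinal lt_u \in [set v] by rewrite full inE.
by rewrite inE -(inj_eq val_inj) /=; case: eqP; lia.
Qed.

Lemma sum_mult_cut sg Y : (forall v, [set v; sg v] \in edges w) ->
  (\sum_(e in cut w Y) mult sg e)%N = cross sg Y.
Proof.
move=> step; rewrite /cross card_set_sum.
under eq_bigr => e _ do rewrite /mult card_set_sum.
rewrite exchange_big /=; apply: eq_bigr => v _.
have sv : v != sg v by move: (step v); rewrite inE cards2; case: (v != sg v).
by rewrite sum_eq_mem mem_cut // card_set2I_eq1.
Qed.

Lemma cut_setC Y : cut w (~: Y) = cut w Y.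
Proof.
apply/setP => e; apply/setIdP/setIdP => -[eE cutY]; split => //;
  have [a [b [ab eab]]] := edge_set2 eE; move: cutY; rewrite eab !card_set2I_eq1 // !inE;
  by case: (a \in Y); case: (b \in Y).
Qed.

Lemma chi_cut_set0 : chi (cut w set0) = 0.
Proof. by apply/matrixP => i j; rewrite !mxE /cut !inE setI0 cards0 andbF. Qed.

Lemma chiE S j : chi S 0 j = ((enum_val j \in S) : nat)%:R.
Proof. by rewrite mxE; case: (_ \in _). Qed.

Lemma chi_sum (A : {set {set 'I_n}}) : chi A = \sum_(x in A) chi [set x].
Proof.
apply/matrixP => i j; rewrite (ord1 i) summxE chiE.
rewrite (eq_bigr (fun x => ((enum_val j == x) : nat)%:R)); last first.
  by move=> x _; rewrite chiE in_set1.
by rewrite -natr_sum sum_eq_mem.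
Qed.

Lemma chi1_in_from p (S : 'M[R]_(p, m)) (A : {set {set 'I_n}}) x0 :
  x0 \in A -> (chi A <= S)%MS -> (forall x, x \in A -> x != x0 -> (chi [set x] <= S)%MS) ->
  (chi [set x0] <= S)%MS.
Proof.
move=> x0A AS others.
have -> : chi [set x0] = chi A - \sum_(x in A | x != x0) chi [set x].
  by rewrite (chi_sum A) (bigD1 x0 x0A) /= addrK.
rewrite addmx_sub // -scaleN1r scalemx_sub // summx_sub // => x /andP[].
exact: others.
Qed.

Definition down_edges (k : 'I_n) : {set {set 'I_n}} :=
  [set e in edges w | (k \in e) && (e \subset prefix k.+1)].
Definition up_edges (k : 'I_n) : {set {set 'I_n}} :=
  [set e in edges w | (k \in e) && (e \subset ~: prefix k)].

(* Moving the boundary of a prefix past k: the edges at k that change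
   status are counted twice by Delta({k}) + Delta(prefix k). *)
Lemma chi_down_edges k :
  chi (cut w [set k]) + chi (cut w (prefix k)) =
  chi (cut w (prefix k.+1)) + 2%:R *: chi (down_edges k).
Proof.
apply/matrixP => i j; rewrite (ord1 i) !(chiE, mxE).
have eE := enum_valP j; have [a [b [ab eab]]] := edge_set2 eE.
rewrite !mem_cut // in_set eE eab /= !card_set2I_eq1 // subUset !sub1set !inE.
rewrite -!natrD -natrM -natrD; congr (_%:R).
by move: ab; rewrite -!(inj_eq val_inj) /=; lia.
Qed.

Lemma chi_up_edges k :
  chi (cut w [set k]) + chi (cut w (prefix k.+1)) =
  chi (cut w (prefix k)) + 2%:R *: chi (up_edges k).
Proof.
apply/matrixP => i j; rewrite (ord1 i) !(chiE, mxE).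
have eE := enum_valP j; have [a [b [ab eab]]] := edge_set2 eE.
rewrite !mem_cut // in_set eE eab /= !card_set2I_eq1 // subUset !sub1set !inE.
rewrite -!natrD -natrM -natrD; congr (_%:R).
by move: ab; rewrite -!(inj_eq val_inj) /=; lia.
Qed.

End CutCalculus.

Section TwoCycles.
Variables (R : realType) (n : nat) (sg1 sg2 : 'I_n -> 'I_n).
Hypotheses (cyc1 : cyclic_perm sg1) (cyc2 : cyclic_perm sg2) (n_gt1 : (1 < n)%N).
Local Open Scope ring_scope.

Definition cycles_weight (e : {set 'I_n}) : R := (mult sg1 e + mult sg2 e)%:R.
Local Notation w := cycles_weight.
Local Notation m := #|edges w|.

Lemma cycles_weight_nonneg : nonneg_weight w.
Proof. by move=> e _; rewrite ler0n. Qed.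

Lemma mem_cycles_edges e :
  (e \in edges w) = (#|e| == 2%N) && (0 < mult sg1 e + mult sg2 e)%N.
Proof. by rewrite inE ltr0n. Qed.

Lemma step_edge1 v : [set v; sg1 v] \in edges w.
Proof.
have [_ nfix _] := cyc1.
by rewrite mem_cycles_edges cards2 (eq_sym v) nfix addn_gt0 mult_step_gt0.
Qed.

Lemma step_edge2 v : [set v; sg2 v] \in edges w.
Proof.
have [_ nfix _] := cyc2.
by rewrite mem_cycles_edges cards2 (eq_sym v) nfix addn_gt0 mult_step_gt0 orbT.
Qed.

Lemma cut_weightE Y : cut_weight w Y = (cross sg1 Y + cross sg2 Y)%:R.
Proof.
rewrite /cut_weight -(sum_mult_cut _ step_edge1) -(sum_mult_cut _ step_edge2).
by rewrite -big_split natr_sum.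
Qed.

(* Each cycle crosses a proper cut at least twice and a singleton exactly
   twice, so the minimum cuts are those crossed exactly twice by both. *)
Lemma cross_set1 (sg : 'I_n -> 'I_n) v : cyclic_perm sg -> cross sg [set v] = 2%N.
Proof.
move=> cyc; have [inj _ _] := cyc; have /andP[v0 vT] := proper_set1 v n_gt1.
by apply/eqP; rewrite eqn_leq cross_set1_le // cross_ge2.
Qed.

Lemma min_cut_sideE Y : min_cut_sideb w Y =
  [&& proper_nonempty Y, cross sg1 Y == 2%N & cross sg2 Y == 2%N].
Proof.
have cross_ge2_both Z : proper_nonempty Z -> (2 <= cross sg1 Z)%N && (2 <= cross sg2 Z)%N.
  by case/andP => Z0 ZT; rewrite !cross_ge2.
rewrite /min_cut_sideb; case: (boolP (proper_nonempty Y)) => //= pY.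
apply/forallP/andP => [/(_ [set Ordinal (ltnW n_gt1)])|[/eqP c1 /eqP c2] Z].
  rewrite proper_set1 //= !cut_weightE ler_nat !cross_set1 //.
  by case/andP: (cross_ge2_both Y pY) => ? ?; split; apply/eqP; lia.
apply/implyP => /cross_ge2_both /andP[? ?]; rewrite !cut_weightE ler_nat c1 c2; lia.
Qed.

Lemma min_cut_side_set1 v : min_cut_sideb w [set v].
Proof. by rewrite min_cut_sideE proper_set1 // !cross_set1. Qed.

(* Upper bound: the signed difference of the two cycles is orthogonal to
   every minimum cut, as each of them is crossed twice by both cycles. *)
Definition cycles_diff : 'cV[R]_m :=
  \col_j ((mult sg1 (enum_val j))%:R - (mult sg2 (enum_val j))%:R).

Lemma mincut_span_ker : (mincut_span w <= kermx cycles_diff)%MS.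
Proof.
apply/sumsmx_subP => X minX; rewrite genmxE; apply/sub_kermxP.
apply/matrixP => i k; rewrite !ord1 !mxE.
under eq_bigr => j _ do rewrite chiE mxE mulrBr -!natrM.
rewrite sumrB -!natr_sum.
have sum_cut sg : (\sum_(j < m) ((enum_val j \in cut w X) * mult sg (enum_val j)))%N =
                  (\sum_(e in cut w X) mult sg e)%N.
  transitivity (\sum_(e in edges w) (e \in cut w X) * mult sg e)%N.
    by rewrite (big_enum_val (fun e => (e \in cut w X) * mult sg e)%N).
  rewrite big_mkcond [RHS]big_mkcond; apply: eq_bigr => e _; rewrite /cut !inE.
  by case: (_ && _); case: (_ == 1%N); rewrite ?mul1n ?mul0n.
move: minX; rewrite min_cut_sideE => /and3P[_ /eqP c1 /eqP c2].
by rewrite !sum_cut !sum_mult_cut ?c1 ?c2 ?subrr //; [exact: step_edge2|exact: step_edge1].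
Qed.

Lemma rank_mincut_span_le e : e \in edges w -> mult sg1 e != mult sg2 e ->
  (\rank (mincut_span w) <= m - 1)%N.
Proof.
move=> eE neq; apply: rank_le_pred_ker mincut_span_ker _.
apply/negP => /eqP /matrixP /(_ (enum_rank_in eE e) 0); rewrite !mxE enum_rankK_in //.
by move/eqP; rewrite subr_eq0 eqr_nat (negbTE neq).
Qed.

End TwoCycles.

Section CycleArithmetic.
Variable N : nat.
Local Notation n := N.+2.

(* The two Hamiltonian cycles on 0, ..., n-1, as successor functions:
   C1 = 0, 1, 2, ..., n-1, 0 and
   C2 = 0, 1, 3, 5, ... (odd vertices upwards), ... 6, 4, 2, 0 (even ones downwards). *)
Definition succ1 (i : nat) : nat := if i.+1 < n then i.+1 else 0.
Definition succ2 (i : nat) : nat :=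
  if odd i then (if i + 2 < n then i + 2 else if i + 1 < n then i + 1 else i - 1)
  else (if i == 0 then 1 else i - 2).

(* The edges of either cycle: {a, b} with a < b and b - a in {1, 2}, or
   the closing edge {0, n-1}. *)
Definition link (a b : nat) : bool :=
  (b == a.+1) || (b == a.+2) || ((a == 0) && (b == n.-1)).

Ltac unfold_succ := rewrite /succ1 /succ2; repeat case: ifP => /= ?.

Lemma succ1_lt i : i < n -> succ1 i < n. Proof. unfold_succ; lia. Qed.
Lemma succ2_lt i : i < n -> succ2 i < n. Proof. unfold_succ; lia. Qed.
Lemma succ1_neq i : i < n -> succ1 i != i. Proof. unfold_succ; lia. Qed.
Lemma succ2_neq i : i < n -> succ2 i != i. Proof. unfold_succ; lia. Qed.

Lemma succ1_inj i j : i < n -> j < n -> succ1 i = succ1 j -> i = j.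
Proof. rewrite /succ1; do 2 case: ifP => /= ?; lia. Qed.

Lemma succ2_inj i j : i < n -> j < n -> succ2 i = succ2 j -> i = j.
Proof.
rewrite /succ2; case: ifP => ?; (try case: ifP => ?); (try case: ifP => ?);
 case: ifP => ?; (try case: ifP => ?); (try case: ifP => ?); lia.
Qed.

Lemma succ1_link i : i < n -> link (minn i (succ1 i)) (maxn i (succ1 i)).
Proof. rewrite /link; unfold_succ; lia. Qed.

Lemma succ2_link i : i < n -> link (minn i (succ2 i)) (maxn i (succ2 i)).
Proof. rewrite /link; unfold_succ; lia. Qed.

(* Each cycle visits every vertex: a property invariant under a step holds
   everywhere as soon as it holds at 0. *)
Lemma succ1_connected (P : pred nat) : (forall i, i < n -> P i = P (succ1 i)) ->
  forall i, i < n -> P i = P 0.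
Proof.
move=> inv; elim=> [//|i IH] lt; rewrite -IH ?(ltnW lt) // (inv i (ltnW lt)).
by rewrite /succ1 lt.
Qed.

Lemma succ2_connected (P : pred nat) : (forall i, i < n -> P i = P (succ2 i)) ->
  forall i, i < n -> P i = P 0.
Proof.
move=> inv.
have even_case j : j.*2 < n -> P j.*2 = P 0.
  elim: j => [//|j IH] lt; rewrite inv // /succ2 odd_double.
  have -> : (j.+1.*2 == 0) = false by lia.
  have -> : j.+1.*2 - 2 = j.*2 by lia.
  apply: IH; lia.
have odd_case j : j.*2.+1 < n -> P j.*2.+1 = P 0.
  elim: j => [lt|j IH lt]; first by rewrite [RHS]inv.
  rewrite -IH; last lia.
  rewrite [RHS]inv; last lia.
  rewrite /succ2 /= odd_double /=.
  have -> : j.*2.+1 + 2 < n by lia.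
  congr P; lia.
move=> i lt; have := odd_double_half i; case: (odd i) => /= i_eq; rewrite -i_eq.
  by rewrite add1n odd_case //; lia.
by rewrite add0n even_case //; lia.
Qed.

Lemma succ1_prefix_cross k i : 1 <= k -> k < n -> i < n -> (i < k) != (succ1 i < k) ->
  (i == k - 1) || (i == n - 1).
Proof. unfold_succ; lia. Qed.

Lemma succ2_prefix_cross k i : 2 <= k -> k <= n - 2 -> i < n -> (i < k) != (succ2 i < k) ->
  (i == k + odd k) || (i == k - 2 + ~~ odd k).
Proof. unfold_succ; lia. Qed.

End CycleArithmetic.

Section Construction.
Variables (R : realType) (N : nat).
Local Notation n := N.+2.
Local Open Scope ring_scope.

Definition cyc1 (v : 'I_n) : 'I_n := inord (succ1 N v).
Definition cyc2 (v : 'I_n) : 'I_n := inord (succ2 N v).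

Lemma cyc1E v : cyc1 v = succ1 N v :> nat.
Proof. by rewrite inordK // succ1_lt. Qed.

Lemma cyc2E v : cyc2 v = succ2 N v :> nat.
Proof. by rewrite inordK // succ2_lt. Qed.

Lemma cyclic_perm_of_succ (s : nat -> nat) (sg : 'I_n -> 'I_n) :
  (forall v, sg v = s v :> nat) ->
  (forall i j, (i < n)%N -> (j < n)%N -> s i = s j -> i = j) ->
  (forall i, (i < n)%N -> s i != i) ->
  (forall P : pred nat, (forall i, (i < n)%N -> P i = P (s i)) ->
     forall i, (i < n)%N -> P i = P 0%N) ->
  cyclic_perm sg.
Proof.
move=> sgE s_inj s_neq s_conn; split.
- move=> u v /(congr1 (@nat_of_ord _)); rewrite !sgE => /s_inj eq_uv.
  by apply: val_inj; apply: eq_uv.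
- by move=> v; rewrite -(inj_eq (@ord_inj _)) sgE s_neq.
move=> Y inv.
have memY (v : 'I_n) : (v \in Y) = (ord0 \in Y).
  rewrite -[v]inord_val -[ord0]inord_val.
  apply: (s_conn (fun i => inord i \in Y)) => // i lt_in; rewrite inv.
  have lt_si : (s i < n)%N by rewrite -[i](inordK lt_in) -sgE.
  by congr (_ \in Y); apply: ord_inj; rewrite sgE !inordK.
case: (boolP (ord0 \in Y)) => Y0; [right|left]; apply/setP => v.
  by rewrite memY Y0 inE.
by rewrite memY (negbTE Y0) inE.
Qed.

Lemma cyclic_cyc1 : cyclic_perm cyc1.
Proof.
apply: (cyclic_perm_of_succ cyc1E); [exact: succ1_inj | exact: succ1_neq | exact: succ1_connected].
Qed.

Lemma cyclic_cyc2 : cyclic_perm cyc2.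
Proof.
apply: (cyclic_perm_of_succ cyc2E); [exact: succ2_inj | exact: succ2_neq | exact: succ2_connected].
Qed.

Definition graph_weight : {set 'I_n} -> R := cycles_weight R cyc1 cyc2.
Local Notation w := graph_weight.

Lemma cyc1_edge (u v : 'I_n) : u = succ1 N v :> nat -> [set v; u] \in edges w.
Proof.
move=> uE; have -> : u = cyc1 v by apply: ord_inj; rewrite cyc1E.
exact: (step_edge1 R cyc2 cyclic_cyc1).
Qed.

Lemma cyc2_edge (u v : 'I_n) : u = succ2 N v :> nat -> [set v; u] \in edges w.
Proof.
move=> uE; have -> : u = cyc2 v by apply: ord_inj; rewrite cyc2E.
exact: (step_edge2 R cyc1 cyclic_cyc2).
Qed.

Lemma link_edge (a b : 'I_n) : (a < b)%N -> link N a b -> [set a; b] \in edges w.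
Proof.
move=> lt_ab; have lt_bn := ltn_ord b.
rewrite /link => /orP[/orP[/eqP b1|/eqP b2]|/andP[/eqP a0 /eqP bn]].
- by apply: cyc1_edge; rewrite /succ1; case: ifP; lia.
- case: (boolP (odd a)) => odd_a.
    by apply: cyc2_edge; rewrite /succ2; repeat case: ifP; lia.
  by rewrite setUC; apply: cyc2_edge; rewrite /succ2; repeat case: ifP; lia.
- by rewrite setUC; apply: cyc1_edge; rewrite /succ1; case: ifP; lia.
Qed.

Lemma edge_link e : e \in edges w ->
  exists a b : 'I_n, [/\ (a < b)%N, e = [set a; b] & link N a b].
Proof.
have step_link (sg : 'I_n -> 'I_n) (s : nat -> nat) v :
    (forall v, sg v = s v :> nat) -> (forall i, (i < n)%N -> link N (minn i (s i)) (maxn i (s i))) ->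
    sg v != v -> exists a b : 'I_n, [/\ (a < b)%N, [set v; sg v] = [set a; b] & link N a b].
  move=> sgE s_link sv; have := s_link v (ltn_ord v); rewrite -sgE.
  move: sv; rewrite -(inj_eq (@ord_inj _)); case: (ltngtP v (sg v)) => // [lt|gt] _.
    by exists v, (sg v).
  by exists (sg v), v; rewrite setUC.
rewrite mem_cycles_edges => /andP[_]; rewrite addn_gt0.
case/orP => /card_gt0P [v]; rewrite inE => /eqP <-.
  by apply: step_link cyc1E (@succ1_link N) _; case: cyclic_cyc1.
by apply: step_link cyc2E (@succ2_link N) _; case: cyclic_cyc2.
Qed.

Local Notation span := (mincut_span w).

Lemma set1_in_span v : (chi w (cut w [set v]) <= span)%MS.
Proof. exact/chi_cut_in_span/(min_cut_side_set1 R cyclic_cyc1 cyclic_cyc2 (ltn0Sn N)). Qed.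

(* Prefixes with 2 <= k <= n-2 are arcs of both cycles. *)
Lemma min_cut_prefix k : (2 <= k <= N)%N -> min_cut_sideb w (prefix k).
Proof.
case/andP => k2 kN.
have pk : proper_nonempty (prefix k : {set 'I_n}).
  apply/andP; split; first by apply/set0Pn; exists ord0; rewrite inE /=; lia.
  by apply/negP => /eqP full; have := in_setT (@ord_max N.+1); rewrite -full inE /=; lia.
have k1 : (1 <= k)%N by lia.
have kn : (k < n)%N by lia.
rewrite (min_cut_sideE R cyclic_cyc1 cyclic_cyc2) // pk /=.
case/andP: pk => p0 pT; rewrite !eqn_leq !cross_ge2 ?andbT //;
  [|exact: cyclic_cyc2|exact: cyclic_cyc1].
apply/andP; split.
  apply: (@cross_le2 _ _ _ (inord (k - 1)) ord_max) => v; rewrite !inE cyc1E.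
  rewrite -!(inj_eq (@ord_inj _)) inordK /=; last lia.
  by move=> cr; have := succ1_prefix_cross k1 kn (ltn_ord v) cr; lia.
apply: (@cross_le2 _ _ _ (inord (k + odd k)) (inord (k - 2 + ~~ odd k))) => v.
rewrite !inE cyc2E -!(inj_eq (@ord_inj _)) !inordK /=; try lia.
by move=> cr; have := succ2_prefix_cross k2 (_ : k <= n - 2)%N (ltn_ord v) cr; lia.
Qed.

Lemma prefix_in_span k : (chi w (cut w (prefix k)) <= span)%MS.
Proof.
case: (leqP n k) => [nk|kn].
  have -> : prefix k = ~: set0 :> {set 'I_n} by apply/setP => v; rewrite !inE; have := ltn_ord v; lia.
  by rewrite cut_setC chi_cut_set0 sub0mx.
case: k kn => [|[|k]] kn.
- have -> : prefix 0 = set0 :> {set 'I_n} by apply/setP => v; rewrite !inE.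
  by rewrite chi_cut_set0 sub0mx.
- have -> : prefix 1 = [set ord0] :> {set 'I_n} by apply/setP => -[[|v] ?]; rewrite !inE.
  exact: set1_in_span.
case: (leqP k.+2 N) => kN.
  by apply/chi_cut_in_span/min_cut_prefix; rewrite kN.
have -> : prefix k.+2 = ~: [set ord_max] :> {set 'I_n}.
  apply/setP => v; rewrite !inE -(inj_eq (@ord_inj _)) /=; have := ltn_ord v; lia.
by rewrite cut_setC set1_in_span.
Qed.

Lemma down_edges_in_span k : (chi w (down_edges w k) <= span)%MS.
Proof. by apply: half_submx (chi_down_edges w k) _ _ _; rewrite ?set1_in_span ?prefix_in_span. Qed.

Lemma up_edges_in_span k : (chi w (up_edges w k) <= span)%MS.
Proof. by apply: half_submx (chi_up_edges w k) _ _ _; rewrite ?set1_in_span ?prefix_in_span. Qed.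

End Construction.

Section LowerBound.
Variables (R : realType) (N : nat).
Local Notation n := N.+2.
Local Notation w := (@graph_weight R N).
Local Notation m := #|edges w|.
Local Notation chi := (chi w).
Local Notation span := (mincut_span w).
Local Open Scope ring_scope.

(* The closing edge {0, n-1} of C1: the one direction the lower-bound
   elimination cannot reach. *)
Definition closing_edge : {set 'I_n} := [set ord0; ord_max].

Local Notation span_closing := (span + <<chi [set closing_edge]>>)%MS.

Lemma closing_edgeE (a b : 'I_n) : a = 0%N :> nat -> b = n.-1 :> nat -> [set a; b] = closing_edge.
Proof. by move=> a0 bn; congr [set _; _]; apply: ord_inj. Qed.

Lemma span_sub_closing p (X : 'M_(p, m)) : (X <= span)%MS -> (X <= span_closing)%MS.
Proof. by move=> XS; apply: submx_trans XS (addsmxSl _ _). Qed.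

Lemma closing_in_span_closing : (chi [set closing_edge] <= span_closing)%MS.
Proof. by apply: submx_trans (addsmxSr _ _); rewrite genmxE. Qed.

(* A triangular elimination, by increasing lower end a: once every edge
   whose lower end is below a has its unit vector in span_closing, so do
   {a, a+1}, isolated among the edges at a+1 going down, and then {a, a+2},
   isolated among the edges at a going up. *)
Section Elimination.
Variable a : 'I_n.
Hypothesis below : forall c d : 'I_n, (c < a)%N -> (c < d)%N -> link N c d ->
  (chi [set [set c; d]] <= span_closing)%MS.

Lemma succ_edge_unit (b : 'I_n) : b = a.+1 :> nat -> (chi [set [set a; b]] <= span_closing)%MS.
Proof.
move=> bE; apply: (@chi1_in_from _ _ _ _ _ (down_edges w b)).
- by rewrite inE link_edge ?inE ?subUset ?sub1set ?inE /= ?eqxx ?orbT /link ?bE; lia.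
- exact/span_sub_closing/down_edges_in_span.
move=> x; rewrite inE => /and3P[xE]; have [c [d [cd -> l]]] := edge_link xE.
rewrite !inE subUset !sub1set !inE -!(inj_eq (@ord_inj _)) => bcd /andP[cb db] neq.
have dE : d = b by apply: ord_inj; lia.
suff lt_ca : (c < a)%N by apply: below.
by move: neq; rewrite dE; case: (ltngtP c a) => // [ca|ac]; [lia | rewrite (ord_inj ac) eqxx].
Qed.

Lemma skip_edge_unit (b : 'I_n) : b = a.+2 :> nat -> (chi [set [set a; b]] <= span_closing)%MS.
Proof.
move=> bE; apply: (@chi1_in_from _ _ _ _ _ (up_edges w a)).
- by rewrite inE link_edge ?inE ?subUset ?sub1set ?inE /= ?eqxx /link ?bE; lia.
- exact/span_sub_closing/up_edges_in_span.
move=> x; rewrite inE => /and3P[xE]; have [c [d [cd -> l]]] := edge_link xE.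
rewrite !inE subUset !sub1set !inE -!(inj_eq (@ord_inj _)) -!leqNgt => acd /andP[ac ad] neq.
have cE : c = a by apply: ord_inj; lia.
move: l neq; rewrite cE /link => /orP[/orP[/eqP d1|/eqP d2]|/andP[/eqP a0 /eqP dn]] neq.
- exact: succ_edge_unit.
- by move: neq; rewrite (_ : d = b) ?eqxx //; apply: ord_inj; lia.
- by rewrite closing_edgeE //; exact: closing_in_span_closing.
Qed.

End Elimination.

Lemma edge_unit_in (a b : 'I_n) : (a < b)%N -> link N a b ->
  (chi [set [set a; b]] <= span_closing)%MS.
Proof.
suff all_below j : forall a b : 'I_n, (a < j)%N -> (a < b)%N -> link N a b ->
    (chi [set [set a; b]] <= span_closing)%MS by exact: all_below (ltnSn a).
elim: j => [//|j IH] {}a {}b lt_aj ab.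
have IH' (c d : 'I_n) : (c < a)%N -> (c < d)%N -> link N c d -> (chi [set [set c; d]] <= span_closing)%MS.
  by move=> ca; apply: IH; lia.
rewrite /link => /orP[/orP[/eqP b1|/eqP b2]|/andP[/eqP a0 /eqP bn]].
- exact: (succ_edge_unit IH').
- exact: (skip_edge_unit IH').
- by rewrite closing_edgeE //; exact: closing_in_span_closing.
Qed.

Lemma span_closing_full : (1%:M <= span_closing)%MS.
Proof.
apply/row_subP => i; rewrite row1.
have -> : delta_mx 0 i = chi [set enum_val i].
  apply/matrixP => x y; rewrite (ord1 x) chiE !mxE in_set1 (inj_eq enum_val_inj).
  by case: (y == i).
have [a [b [ab -> l]]] := edge_link (enum_valP i).
exact: edge_unit_in.
Qed.

Lemma rank_span_ge : (m <= \rank span + 1)%N.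
Proof.
apply: leq_trans (rank_le_addsmx_row _ _).
by rewrite -{1}(mxrank1 R m); apply: mxrankS; exact: span_closing_full.
Qed.

End LowerBound.

Section Counting.
Variables (R : realType) (N : nat).
Local Notation n := N.+2.
Local Notation w := (@graph_weight R N).
Local Notation m := #|edges w|.

Lemma inord_set2_eq (a b c d : nat) :
  [set inord a; inord b] = [set inord c; inord d] :> {set 'I_n} ->
  (a < n)%N -> (b < n)%N -> (c < n)%N -> (d < n)%N -> (a = c /\ b = d) \/ (a = d /\ b = c).
Proof.
move=> /set2_eq E an bn cn dn.
by case: E => -[/(congr1 (@nat_of_ord _)) + /(congr1 (@nat_of_ord _))]; rewrite !inordK; auto.
Qed.

(* For n >= 4 the edges are indexed by {a, a+1} (a < n-1), {a, a+2}
   (a < n-2) and {0, n-1}, with no coincidences: m = 2n - 2. *)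
Definition edge_of_index (x : 'I_N.+1 + 'I_N + unit) : {set 'I_n} :=
  match x with
  | inl (inl a) => [set inord a; inord a.+1]
  | inl (inr a) => [set inord a; inord a.+2]
  | inr _ => [set inord 0; inord N.+1]
  end.

Lemma edge_of_index_inj : (2 <= N)%N -> injective edge_of_index.
Proof.
move=> N2 [[i|i]|[]] [[j|j]|[]] //= /inord_set2_eq E.
all: try (have := ltn_ord i); try (have := ltn_ord j); move=> *.
all: have {E} [[ij ij']|[ij ij']] : _ := E ltac:(lia) ltac:(lia) ltac:(lia) ltac:(lia); try lia.
- by congr (inl (inl _)); apply: ord_inj.
- by congr (inl (inr _)); apply: ord_inj.
Qed.

Lemma edges_indexed : edges w = [set edge_of_index x | x in setT].
Proof.
apply/setP => e; apply/idP/imsetP => [eE|[x _ ->]].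
  have [a [b [ab -> l]]] := edge_link eE; have bn := ltn_ord b.
  have pairE (c d : nat) : c = a -> d = b -> [set a; b] = [set inord c; inord d].
    by move=> -> ->; rewrite !inord_val.
  move: l; rewrite /link => /orP[/orP[/eqP b1|/eqP b2]|/andP[/eqP a0 /eqP bN]].
  - have a_lt : (a < N.+1)%N by lia.
    by exists (inl (inl (Ordinal a_lt))) => //=; apply: pairE.
  - have a_lt : (a < N)%N by lia.
    by exists (inl (inr (Ordinal a_lt))) => //=; apply: pairE.
  - by exists (inr tt) => //=; apply: pairE.
case: x => [[i|i]|[]] /=; try have lt_i := ltn_ord i;
  by apply: link_edge; rewrite !inordK /link; lia.
Qed.

Lemma card_edges_large : (2 <= N)%N -> m = (2 * n - 2)%N.
Proof.
move=> N2; rewrite edges_indexed card_imset; last exact: edge_of_index_inj.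
by rewrite cardsT !card_sum !card_ord card_unit; lia.
Qed.

(* For n <= 3 every pair is an edge: G_n is complete and m = 'C(n, 2). *)
Lemma card_edges_small : (N <= 1)%N -> m = 'C(n, 2).
Proof.
move=> N1; rewrite -[in RHS](card_ord n) -card_draws; apply: eq_card => e.
rewrite [RHS]inE; apply/idP/idP => [/setIdP[]//|/cards2P[a [b [ab ->]]]].
have bn := ltn_ord b; have an := ltn_ord a.
move: ab; rewrite -(inj_eq (@ord_inj _)); case: ltngtP => // [lt_ab|lt_ba] _.
  by apply: link_edge; rewrite /link; lia.
by rewrite setUC; apply: link_edge; rewrite /link; lia.
Qed.

End Counting.

Section RankBounds.
Variables (R : realType) (N : nat).
Local Notation n := N.+2.
Local Notation w := (@graph_weight R N).
Local Notation m := #|edges w|.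
Local Notation chi := (chi w).
Local Notation span := (mincut_span w).
Local Open Scope ring_scope.

(* Upper bound for n >= 4: {1, 2} is an edge of C1 but not of C2. *)
Lemma rank_span_le : (2 <= N)%N -> (\rank span <= m - 1)%N.
Proof.
move=> N2; pose e : {set 'I_n} := [set inord 1; inord 2].
have eE : e \in edges w by apply: link_edge; rewrite !inordK /link; lia.
apply: (rank_mincut_span_le (cyclic_cyc1 N) (cyclic_cyc2 N) (ltn0Sn N) eE).
have -> : mult (@cyc2 N) e = 0%N.
  apply/eqP; rewrite cards_eq0; apply/eqP/setP => v; rewrite !inE.
  apply/negP => /eqP /set2_eq => -[] [/(congr1 (@nat_of_ord _)) + /(congr1 (@nat_of_ord _))];
  rewrite cyc2E !inordK; try lia; move=> ->; rewrite /succ2 /=; repeat case: ifP; lia.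
have : (0 < mult (@cyc1 N) e)%N.
  apply/card_gt0P; exists (inord 1); rewrite inE /e; apply/eqP; congr [set _; _].
  have lt2n : (2 < n)%N by lia.
  by apply: ord_inj; rewrite cyc1E !inordK // /succ1 lt2n.
by rewrite -lt0n.
Qed.

(* {0, 1} is the only edge going down from vertex 1. *)
Lemma first_edge_in_span : (chi [set [set ord0; inord 1]] <= span)%MS.
Proof.
have p01E : [set ord0; inord 1] \in edges w by apply: link_edge; rewrite inordK /link.
apply: (@chi1_in_from _ _ _ _ _ (down_edges w (inord 1))).
- by rewrite inE p01E !inE subUset !sub1set !inE inordK ?eqxx ?orbT.
- exact: down_edges_in_span.
move=> x; rewrite inE => /and3P[xE]; have [c [d [cd -> _]]] := edge_link xE.
rewrite !inE subUset !sub1set !inE -!(inj_eq (@ord_inj _)) inordK // => _ /andP[cb db].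
have cE : c = ord0 by apply: ord_inj => /=; lia.
have dE : d = inord 1 by apply: ord_inj; rewrite inordK //; lia.
by rewrite cE dE eqxx.
Qed.

(* For n <= 3 the edges going up from 0 are {0, 1} and the closing edge,
   so the closing edge is reached as well and the span is everything. *)
Lemma closing_in_span_small : (N <= 1)%N -> (chi [set closing_edge N] <= span)%MS.
Proof.
move=> N1; apply: (@chi1_in_from _ _ _ _ _ (up_edges w ord0)).
- have closingE : closing_edge N \in edges w by apply: link_edge; rewrite /link /=; lia.
  by rewrite inE closingE !inE subUset !sub1set !inE eqxx.
- exact: up_edges_in_span.
move=> x; rewrite inE => /and3P[xE]; have [c [d [cd -> _]]] := edge_link xE.
rewrite !inE -!(inj_eq (@ord_inj _)) /= => c0d _ neq.
have cE : c = ord0 by apply: ord_inj => /=; lia.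
have dE : d = inord 1.
  apply: ord_inj; rewrite inordK //; move: neq; rewrite cE /closing_edge.
  have := ltn_ord d; case: (eqVneq d ord_max) => [->|]; first by rewrite eqxx.
  by rewrite -(inj_eq (@ord_inj _)) /=; lia.
by rewrite cE dE; exact: first_edge_in_span.
Qed.

Lemma rank_span_small : (N <= 1)%N -> \rank span = m.
Proof.
move=> N1; apply/eqP; rewrite eqn_leq rank_leq_col -{1}(mxrank1 R m) mxrankS //.
apply: submx_trans (span_closing_full R N) _.
by rewrite addsmx_sub submx_refl genmxE closing_in_span_small.
Qed.

End RankBounds.

Theorem theorem2 (R : realType) (n : nat) :
  (2 <= n)%N ->
  exists w : {set 'I_n} -> R, nonneg_weight w /\ cdim w = (2 * n - 3)%N.
Proof.
case: n => [|[|N]] // _; exists (@graph_weight R N); split.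
  exact: cycles_weight_nonneg.
rewrite cdimE; case: (leqP N 1) => [small|large].
  by rewrite rank_span_small // card_edges_small //; case: N small => [|[|]].
have := rank_span_ge R N; have := rank_span_le R large; have := card_edges_large R large.
lia.
Qed.
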